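(* Setting: $n$ agents on a connected, undirected weighted graph $\mathcal G$ with symmetric adjacency weights $a_{i,j}\ge 0$ ($a_{i,j}>0$ iff $\{i,j\}$ is an edge) and Laplacian $L_n$; let $L=L_n\otimes I_m$. For $i\in\{1,\dots,n\}$, $\Omega_i\subset\mathbb R^{q_i}$ is closed and convex, $f^i$ is strictly convex on an open set containing $\Omega_i$, $W_i\in\mathbb R^{m\times q_i}$, and $d_i\in\mathbb R^m$ with $\sum_{i=1}^n d_i=d_0$. Let $\Omega=\prod_i\Omega_i$, $f(x)=\sum_i f^i(x_i)$, $W=[W_1,\dots,W_n]$, $\overline W=\mathrm{diag}\{W_1,\dots,W_n\}\in\mathbb R^{nm\times\sum_iq_i}$, $d=[d_1^{\rm T},\dots,d_n^{\rm T}]^{\rm T}$, and assume Slater's condition: some $x$ in the interior of $\Omega$ satisfies $Wx=d_0$. Consider the optimization problem $\min f(x)$ subject to $Wx=d_0$, $x\in\Omega$, and the differential inclusion (DPOFA) in $(y,\lambda,z)\in\mathbb R^{\sum_iq_i}\times\mathbb R^{nm}\times\mathbb R^{nm}$: $$\dot y\in\{-y+x-g+\overline W^{\rm T}\lambda:\ g\in\partial f(x)\},\quad \dot\lambda=d-\overline Wx-L\lambda-Lz,\quad \dot z=L\lambda,\quad x=P_\Omega(y).$$ Then: if $(y^*,\lambda^*,z^* )$ is an equilibrium of DPOFA, $x^*=P_\Omega(y^* )$ is a solution of the optimization problem; conversely, if $x^*\in\Omega$ is a solution of the optimization problem, there exists an equilibrium $(y^*,\lambda^*,z^* )$ of DPOFA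 with $x^*=P_\Omega(y^* )$.
   Context: $\partial f$ is the convex subdifferential; $P_\Omega$ is Euclidean projection onto $\Omega$. An equilibrium of the inclusion $\dot\xi\in\mathcal F(\xi)$ is a point $\xi_e$ with $0\in\mathcal F(\xi_e)$; here this means there is $g\in\partial f(x^* )$, $x^*=P_\Omega(y^* )$, with $0=-y^*+x^*-g+\overline W^{\rm T}\lambda^*$, $0=d-\overline Wx^*-Lz^*$, $0=L\lambda^*$. *)

From HB Require Import structures.
From mathcomp Require Import all_boot all_order all_algebra.
From mathcomp Require Import all_classical all_reals all_analysis.
Set Implicit Arguments. Unset Strict Implicit. Unset Printing Implicit Defensive.
Import Order.TTheory GRing.Theory Num.Theory.
Local Open Scope ring_scope.
Local Open Scope classical_set_scope.

Section Defs.
Variable R : realType.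

Definition vdot (k : nat) (u v : 'cV[R]_k) : R := (u^T *m v) 0 0.

Definition strictly_convex_on (k : nat) (U : set 'cV[R]_k) (f : 'cV[R]_k -> R) :=
  forall x y t, U x -> U y -> x != y -> 0 < t < 1 ->
    f (t *: x + (1 - t) *: y) < t * f x + (1 - t) * f y.

(* Agent-stacked vectors are represented as families indexed by 'I_n *)
Definition fam (n : nat) (q : 'I_n -> nat) := forall i : 'I_n, 'cV[R]_(q i).

Definition fdot n (q : 'I_n -> nat) (u v : fam q) : R := \sum_i vdot (u i) (v i).
Definition fsub n (q : 'I_n -> nat) (u v : fam q) : fam q := fun i => u i - v i.

Definition prod_set n (q : 'I_n -> nat) (S : forall i, set 'cV[R]_(q i)) : set (fam q) :=
  [set x | forall i, S i (x i)].

Definition sum_fun n (q : 'I_n -> nat) (F : forall i, 'cV[R]_(q i) -> R) (x : fam q) : R :=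
  \sum_i F i (x i).

Definition subgrad n (q : 'I_n -> nat) (U : set (fam q)) (f : fam q -> R) (x g : fam q) :=
  forall x', U x' -> f x + fdot g (fsub x' x) <= f x'.

Definition is_proj n (q : 'I_n -> nat) (Om : set (fam q)) (y x : fam q) :=
  Om x /\ forall z, Om z -> fdot (fsub y x) (fsub y x) <= fdot (fsub y z) (fsub y z).

Definition Wmul n m (q : 'I_n -> nat) (W : forall i, 'M[R]_(m, q i)) (x : fam q) : 'cV[R]_m :=
  \sum_i W i *m x i.
Definition Wbar n m (q : 'I_n -> nat) (W : forall i, 'M[R]_(m, q i)) (x : fam q) :
  fam (fun _ : 'I_n => m) := fun i => W i *m x i.
Definition WbarT n m (q : 'I_n -> nat) (W : forall i, 'M[R]_(m, q i))
  (l : fam (fun _ : 'I_n => m)) : fam q := fun i => (W i)^T *m l i.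

Definition laplacian n (a : 'I_n -> 'I_n -> R) : 'M[R]_n :=
  \matrix_(i, j) ((if i == j then \sum_k a i k else 0) - a i j).
(* (L_n ⊗ I_m) lambda, block i = sum_j (L_n)_{ij} lambda_j *)
Definition kronL n m (Ln : 'M[R]_n) (l : fam (fun _ : 'I_n => m)) :
  fam (fun _ : 'I_n => m) := fun i => \sum_j Ln i j *: l j.

Definition is_solution n m (q : 'I_n -> nat) (Om : set (fam q)) (f : fam q -> R)
  (W : forall i, 'M[R]_(m, q i)) (d0 : 'cV[R]_m) (x : fam q) :=
  Om x /\ Wmul W x = d0 /\
  forall x', Om x' -> Wmul W x' = d0 -> f x <= f x'.

Definition dpofa_equilibrium n m (q : 'I_n -> nat) (Om : set (fam q)) (U : set (fam q))
  (f : fam q -> R) (W : forall i, 'M[R]_(m, q i)) (L : 'M[R]_n)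
  (d : fam (fun _ : 'I_n => m)) (y : fam q) (l z : fam (fun _ : 'I_n => m)) :=
  exists x g : fam q, is_proj Om y x /\ subgrad U f x g /\
    (forall i, - y i + x i - g i + WbarT W l i = 0) /\
    (forall i, d i - Wbar W x i - kronL L l i - kronL L z i = 0) /\
    (forall i, kronL L l i = 0).

End Defs.

(* At an equilibrium, [L lambda = 0] forces consensus [lambda_i = mu] on the connected graph,
   and summing the lambda-equation over the agents kills the Laplacian terms (the columns of a
   symmetric Laplacian sum to zero), so [W x = d0].  Since [y - x = W^T mu - g] and
   [x = P_Omega(y)], the variational inequality of the projection reads
   [<g - W^T mu, w - x> >= 0] on Omega; for feasible [w] the multiplier term vanishes, and
   [g \in subdifferential f(x)] makes [x] optimal.
   Conversely, a minimiser satisfies the KKT conditions: some [g] in the subdifferential and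
   some [mu] satisfy [<W^T mu - g, w - x> <= 0] on Omega.  Then [y := x - g + W^T mu] projects
   onto [x], [lambda_i := mu], and [L z = d - Wbar x] is solvable because its right-hand side
   sums to zero and the range of the Laplacian of a connected graph is the sum-zero subspace.
   The KKT conditions come from two uses of the finite-dimensional Hahn-Banach theorem: for the
   directional derivative of [f] at [x], which is sublinear and nonnegative on the cone of
   feasible directions, and, thanks to Slater's condition, to split the resulting normal vector
   of the feasible set into [W^T mu] and a normal vector of Omega. *)

From HB Require Import structures.
From mathcomp Require Import all_boot all_order all_algebra.
From mathcomp Require Import all_classical all_reals all_analysis.
From mathcomp Require Import ring lra.
Import Order.TTheory GRing.Theory Num.Theory.
Import numFieldTopology.Exports numFieldNormedType.Exports.
Local Open Scope ring_scope.
Local Open Scope classical_set_scope.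

Section InfImage.
Context {R : realType} {T : Type}.
Implicit Types (A : set T) (h : T -> R).

Lemma inf_image_le {A h b k} :
  (forall k, A k -> b <= h k) -> A k -> inf (h @` A) <= h k.
Proof. by move=> hb Ak; apply: ge_inf; [exists b => _ [k' Ak' <-]; apply: hb | exists k]. Qed.

Lemma le_inf_image {A h b} :
  A !=set0 -> (forall k, A k -> b <= h k) -> b <= inf (h @` A).
Proof.
move=> [k Ak] hb; apply: lb_le_inf; first by exists (h k), k.
by move=> _ [k' Ak' <-]; apply: hb.
Qed.

End InfImage.

Section InnerProduct.
Context {R : realType} {N : nat}.
Implicit Types u v w : 'cV[R]_N.

Lemma vdotE u v : vdot u v = \sum_i u i 0 * v i 0.
Proof. by rewrite /vdot mxE; apply: eq_bigr => i _; rewrite mxE. Qed.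

Lemma vdotC u v : vdot u v = vdot v u.
Proof. by rewrite !vdotE; apply: eq_bigr => i _; rewrite mulrC. Qed.

Lemma vdotDr u v w : vdot u (v + w) = vdot u v + vdot u w.
Proof. by rewrite /vdot mulmxDr mxE. Qed.

Lemma vdotZr u v c : vdot u (c *: v) = c * vdot u v.
Proof. by rewrite /vdot -scalemxAr mxE. Qed.

Lemma vdotNr u v : vdot u (- v) = - vdot u v.
Proof. by rewrite -scaleN1r vdotZr mulN1r. Qed.

Lemma vdotBr u v w : vdot u (v - w) = vdot u v - vdot u w.
Proof. by rewrite vdotDr vdotNr. Qed.

Lemma vdot0r u : vdot u 0 = 0.
Proof. by rewrite /vdot mulmx0 mxE. Qed.

Lemma vdotDl u v w : vdot (v + w) u = vdot v u + vdot w u.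
Proof. by rewrite vdotC vdotDr !(vdotC u). Qed.

Lemma vdotZl u v c : vdot (c *: v) u = c * vdot v u.
Proof. by rewrite vdotC vdotZr vdotC. Qed.

Lemma vdotNl u v : vdot (- v) u = - vdot v u.
Proof. by rewrite vdotC vdotNr vdotC. Qed.

Lemma vdotBl u v w : vdot (v - w) u = vdot v u - vdot w u.
Proof. by rewrite vdotDl vdotNl. Qed.

Lemma vdot_ge0 u : 0 <= vdot u u.
Proof. by rewrite vdotE sumr_ge0 // => i _; rewrite -expr2 sqr_ge0. Qed.

Lemma vdot_eq0 u : (vdot u u == 0) = (u == 0).
Proof.
apply/idP/eqP => [|->]; last by rewrite vdot0r.
rewrite vdotE psumr_eq0 => [/allP u0|i _]; last by rewrite -expr2 sqr_ge0.
apply/matrixP => i j; rewrite ord1 mxE.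
by have /implyP/(_ isT) := u0 i (mem_index_enum _); rewrite -expr2 sqrf_eq0 => /eqP.
Qed.

Lemma vdot_trmx m (A : 'M[R]_(m, N)) (l : 'cV[R]_m) v :
  vdot (A^T *m l) v = vdot l (A *m v).
Proof. by rewrite /vdot trmx_mul trmxK mulmxA. Qed.

Lemma vdot_subZ u v t :
  vdot (u - t *: v) (u - t *: v) = vdot u u - 2 * t * vdot u v + t ^+ 2 * vdot v v.
Proof. by rewrite !vdotBl !vdotBr !vdotZl !vdotZr (vdotC v u); ring. Qed.

Lemma orthogonal_kernel_range_tr {m} {A : 'M[R]_(m, N)} {v} :
  (forall a, A *m a = 0 -> vdot v a = 0) -> exists l, v = A^T *m l.
Proof.
move=> vA; have : (v^T <= A)%MS.
  rewrite submxE; apply/eqP/matrixP => i j; rewrite ord1 !mxE.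
  rewrite -[RHS](vA (col j (cokermx A))); last by rewrite colE mulmxA mulmx_coker mul0mx.
  by rewrite vdotE; apply: eq_bigr => k _; rewrite !mxE.
by case/submxP => D vD; exists D^T; rewrite -(trmxK v) vD trmx_mul.
Qed.

End InnerProduct.

Section HahnBanach.
Context {R : realType} {N : nat}.
Implicit Types (p q : 'cV[R]_N -> R) (u v e : 'cV[R]_N).

Definition sublinear p :=
  (forall c v, 0 < c -> p (c *: v) <= c * p v) /\ (forall u v, p (u + v) <= p u + p v).

Lemma sublinearZ {p} c v : sublinear p -> 0 < c -> p (c *: v) = c * p v.
Proof.
move=> [pZ _] c0; apply/eqP; rewrite eq_le pZ //=.
have ci : 0 < c^-1 by rewrite invr_gt0.
have := pZ c^-1 (c *: v) ci; rewrite scalerA mulVf ?gt_eqF // scale1r.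
by rewrite -(ler_pM2l c0) mulrA mulfV ?gt_eqF // mul1r.
Qed.

Lemma sublinear0 {p} : sublinear p -> p 0 = 0.
Proof. by move=> sp; have := sublinearZ 2 0 sp (ltr0Sn _ 1); rewrite scaler0 => h; lra. Qed.

Lemma sublinear_scale_ge {p} t v : sublinear p -> t * p v <= p (t *: v).
Proof.
move=> sp; have [t0|t0|->] := ltgtP t 0; last by rewrite mul0r scale0r sublinear0.
- have := sp.2 v (- v); rewrite subrr sublinear0 // => h.
  rewrite -[t *: v]opprK -scaleNr -scalerN sublinearZ ?oppr_gt0 //; nra.
- by rewrite sublinearZ.
Qed.

Lemma inf_sublinear (T : lmodType R) (A : 'cV[R]_N -> set T) (F : 'cV[R]_N -> T -> R) :
  (forall v, A v !=set0) ->
  (forall v, exists b, forall k, A v k -> b <= F v k) ->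
  (forall c v k, 0 < c -> A v k -> A (c *: v) (c *: k) /\ F (c *: v) (c *: k) <= c * F v k) ->
  (forall u v k1 k2, A u k1 -> A v k2 ->
     A (u + v) (k1 + k2) /\ F (u + v) (k1 + k2) <= F u k1 + F v k2) ->
  sublinear (fun v => inf (F v @` A v)).
Proof.
move=> A0 Fb FZ FD; split => [c v c0|u v].
- rewrite mulrC -ler_pdivrMr //; apply: le_inf_image (A0 v) _ => k Ak.
  have [Ack FcZ] := FZ c v k c0 Ak; have [b hb] := Fb (c *: v).
  by rewrite ler_pdivrMr // mulrC; apply: le_trans (inf_image_le hb Ack) FcZ.
- rewrite -lerBlDr; apply: le_inf_image (A0 u) _ => k1 Ak1.
  rewrite lerBlDr -lerBlDl; apply: le_inf_image (A0 v) _ => k2 Ak2.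
  have [Ak12 FDk] := FD u v k1 k2 Ak1 Ak2; have [b hb] := Fb (u + v).
  by rewrite lerBlDl; apply: le_trans (inf_image_le hb Ak12) FDk.
Qed.

Definition affine_along p e c := forall v s, p (v + s *: e) = p v + s * c.

Lemma affine_alongW p e c :
  (forall v s, p (v + s *: e) <= p v + s * c) -> affine_along p e c.
Proof.
move=> pe v s; apply/eqP; rewrite eq_le pe /=.
by have := pe (v + s *: e) (- s); rewrite -addrA -scalerDl subrr scale0r addr0; lra.
Qed.

Definition extend_along p e v := inf ((fun t : R^o => p (v + t *: e) - t * p e) @` setT).

Section ExtendAlong.
Variables (p : 'cV[R]_N -> R) (e : 'cV[R]_N).
Hypothesis sp : sublinear p.

Let shift_lb v : exists b, forall t : R^o, setT t -> b <= p (v + t *: e) - t * p e.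
Proof.
exists (- p (- v)) => t _; have := sublinear_scale_ge t e sp.
by have := sp.2 (v + t *: e) (- v); rewrite addrC addKr; lra.
Qed.

Lemma extend_along_le_shift v t : extend_along p e v <= p (v + t *: e) - t * p e.
Proof. by have [b hb] := shift_lb v; apply: inf_image_le hb _. Qed.

Lemma extend_along_le v : extend_along p e v <= p v.
Proof. by have := extend_along_le_shift v 0; rewrite scale0r addr0 mul0r subr0. Qed.

Lemma extend_along_sublinear : sublinear (extend_along p e).
Proof.
apply: inf_sublinear => [v|//|c v t c0 _|u v t1 t2 _ _]; first by exists 0.
- split=> //; rewrite -scalerA -scalerDr sublinearZ // /GRing.scale /=; lra.
- split=> //; have := sp.2 (u + t1 *: e) (v + t2 *: e).
  rewrite addrACA -scalerDl; lra.
Qed.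

Lemma extend_along_affine : affine_along (extend_along p e) e (p e).
Proof.
apply: affine_alongW => v s; rewrite -lerBlDr.
have [b hb] := shift_lb v; apply: le_inf_image => [|t _]; first by exists 0.
have := extend_along_le_shift (v + s *: e) (t - s).
by rewrite -addrA -scalerDl addrCA subrr addr0 mulrBl; lra.
Qed.

Lemma extend_along_affineW e' c :
  affine_along p e' c -> affine_along (extend_along p e) e' c.
Proof.
move=> pe'; apply: affine_alongW => v s; rewrite -lerBlDr.
apply: le_inf_image => [|t _]; first by exists 0.
by have := extend_along_le_shift (v + s *: e') t; rewrite addrAC pe'; lra.
Qed.

End ExtendAlong.

Lemma sublinear_minorant_affine p (s : seq 'I_N) : sublinear p ->
  exists q (c : 'I_N -> R), [/\ sublinear q, (forall v, q v <= p v) &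
    forall k, k \in s -> affine_along q (delta_mx k 0) (c k)].
Proof.
move=> sp; elim: s => [|k0 s [q [c [sq qp qc]]]]; first by exists p, (fun _ => 0).
exists (extend_along q (delta_mx k0 0)), (fun k => if k == k0 then q (delta_mx k0 0) else c k).
split; first exact: extend_along_sublinear.
  by move=> v; apply: le_trans (extend_along_le _ _ sq v) (qp v).
move=> k; rewrite inE; case: eqP => [-> _|_ /= ks]; first exact: extend_along_affine.
exact/extend_along_affineW/qc.
Qed.

Theorem hahn_banach {p} : sublinear p -> exists g, forall v, vdot g v <= p v.
Proof.
move=> sp; have [q [c [sq qp qc]]] := sublinear_minorant_affine p (enum 'I_N) sp.
exists (\col_k c k) => v; suff -> : vdot (\col_k c k) v = q v by apply: qp.
(* [q] is affine along every basis vector, hence linear. *)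
have qsum (r : seq 'I_N) : q (\sum_(k <- r) v k 0 *: delta_mx k 0) = \sum_(k <- r) v k 0 * c k.
  elim: r => [|k r IH]; first by rewrite !big_nil sublinear0.
  by rewrite !big_cons addrC qc ?mem_enum // IH addrC.
have vE : v = \sum_(k <- enum 'I_N) v k 0 *: delta_mx k 0.
  by rewrite big_enum /= {1}[v]matrix_sum_delta; apply: eq_bigr => i _; rewrite big_ord1.
rewrite {2}vE qsum vdotE big_enum /=; apply: eq_bigr => i _.
by rewrite mxE mulrC.
Qed.

End HahnBanach.

Lemma ratio_itv01 {R : realType} (a b : R) : 0 <= a -> 0 <= b -> 0 < a + b ->
  0 <= a / (a + b) <= 1.
Proof. by move=> a0 b0 ab0; rewrite divr_ge0 ?addr_ge0 //= ler_pdivrMr // mul1r lerDl. Qed.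

Section ConvexAnalysis.
Context {R : realType} {N : nat}.
Implicit Types (A C K U : set 'cV[R]_N) (f : 'cV[R]_N -> R) (u v w X : 'cV[R]_N).

Lemma convex_setP A : convex_set A <->
  forall x y t, 0 <= t <= 1 -> A x -> A y -> A (t *: x + (1 - t) *: y).
Proof.
split=> [cA x y t /andP[t0 t1] Ax Ay|cA x y l]; last first.
  by rewrite !inE => Ax Ay; apply: cA => //; rewrite ge0 le1.
by have := cA x y (Itv01 t0 t1); rewrite !inE; apply.
Qed.

Lemma convex_functionP U f : convex_function U f <->
  forall x y t, 0 <= t <= 1 -> U x -> U y ->
    f (t *: x + (1 - t) *: y) <= t * f x + (1 - t) * f y.
Proof.
split=> [cf x y t /andP[t0 t1] Ux Uy|cf l x y]; last first.
  by rewrite !inE => Ux Uy; apply: cf => //; rewrite ge0 le1.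
by apply: (cf (Itv01 t0 t1)); rewrite inE.
Qed.

Lemma strictly_convex_on_convex {U f} : strictly_convex_on U f -> convex_function U f.
Proof.
move=> sc; apply/convex_functionP => x y t /andP [t0 t1] Ux Uy.
have [->|tn0] := eqVneq t 0; first by rewrite scale0r add0r subr0 scale1r mul0r add0r mul1r.
have [->|tn1] := eqVneq t 1; first by rewrite scale1r subrr scale0r addr0 mul1r mul0r addr0.
have [->|xy] := eqVneq x y; first by rewrite -scalerDl -mulrDl subrKC scale1r mul1r.
by apply/ltW/sc; rewrite // lt_neqAle eq_sym tn0 t0 lt_neqAle tn1 t1.
Qed.

Definition in_core A X := forall v, exists e, 0 < e /\ A (X + e *: v).

Lemma in_core_mem A X : in_core A X -> A X.
Proof. by move=> /(_ 0) [e [_]]; rewrite scaler0 addr0. Qed.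

Definition convex_cone K :=
  [/\ K 0, (forall c k, 0 <= c -> K k -> K (c *: k))
    & (forall k1 k2, K k1 -> K k2 -> K (k1 + k2))].

Definition feasible_dirs C X := [set k | exists t w, [/\ 0 <= t, C w & k = t *: (w - X)]].

Lemma feasible_dirs_cone {C X} : convex_set C -> C X -> convex_cone (feasible_dirs C X).
Proof.
move=> /convex_setP cC CX; split.
- by exists 0, X; rewrite scale0r.
- move=> c _ c0 [t [w [t0 Cw ->]]]; exists (c * t), w.
  by rewrite scalerA mulr_ge0.
move=> _ _ [t1 [w1 [t10 Cw1 ->]]] [t2 [w2 [t20 Cw2 ->]]].
have [t12|t12] := eqVneq (t1 + t2) 0.
  have [-> ->] : t1 = 0 /\ t2 = 0 by lra.
  by exists 0, X; rewrite !scale0r addr0.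
set s := t1 + t2; have s0 : 0 < s by rewrite lt_neqAle eq_sym t12 addr_ge0.
exists s, ((t1 / s) *: w1 + (1 - t1 / s) *: w2); split; first exact: ltW.
  by apply: cC => //; apply: ratio_itv01.
by apply/matrixP => i j; rewrite !mxE /s; field.
Qed.

Theorem hahn_banach_cone {p : 'cV[R]_N -> R} {K} : sublinear p -> convex_cone K ->
  (forall k, K k -> 0 <= p k) ->
  exists g, (forall v, vdot g v <= p v) /\ (forall k, K k -> 0 <= vdot g k).
Proof.
move=> sp [K0 KZ KD] p_ge0.
pose pK v := inf ((fun k => p (v + k)) @` K).
have pK_lb v : exists b, forall k, K k -> b <= p (v + k).
  exists (- p (- v)) => k Kk; have := sp.2 (v + k) (- v).
  by rewrite addrC addKr; have := p_ge0 k Kk; lra.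
have pK_le v k : K k -> pK v <= p (v + k).
  by have [b hb] := pK_lb v; apply: inf_image_le hb.
have spK : sublinear pK.
  apply: inf_sublinear => [v|//|c v k c0 Kk|u v k1 k2 Kk1 Kk2].
  - by exists 0.
  - by split; [apply: KZ; rewrite ?ltW | rewrite -scalerDr sublinearZ].
  - by split; [apply: KD | rewrite addrACA; apply: sp.2].
have [g hg] := hahn_banach spK.
exists g; split=> [v|k Kk].
  by apply: le_trans (hg v) _; have := pK_le v 0 K0; rewrite addr0.
have := hg (- k); have := pK_le (- k) k Kk.
by rewrite addNr sublinear0 // vdotNr; lra.
Qed.

Section Perspective.
Context {U : set 'cV[R]_N} {f : 'cV[R]_N -> R} {X : 'cV[R]_N}.
Hypotheses (cU : convex_set U) (cf : convex_function U f) (coreX : in_core U X).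

Definition perspective v (r : R) := r * (f (X + r^-1 *: v) - f X).
Definition perspective_dom v := [set r : R | 0 < r /\ U (X + r^-1 *: v)].

Lemma perspective0 r : perspective 0 r = 0.
Proof. by rewrite /perspective scaler0 addr0 subrr mulr0. Qed.

Lemma perspectiveZ {c v r} : 0 < c -> perspective_dom v r ->
  perspective_dom (c *: v) (c * r) /\ perspective (c *: v) (c * r) = c * perspective v r.
Proof.
move=> c0 [r0 Ur]; have E : (c * r)^-1 *: (c *: v) = r^-1 *: v.
  by rewrite scalerA invfM mulrAC mulVf ?gt_eqF // mul1r.
split; last by rewrite /perspective E mulrA.
by split; [exact: mulr_gt0 | rewrite E].
Qed.

Lemma perspectiveD {u v r1 r2} : perspective_dom u r1 -> perspective_dom v r2 ->
  perspective_dom (u + v) (r1 + r2) /\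
  perspective (u + v) (r1 + r2) <= perspective u r1 + perspective v r2.
Proof.
move=> [r10 Uu] [r20 Uv]; set s := r1 + r2; have s0 : 0 < s by apply: addr_gt0.
have t01 : 0 <= r1 / s <= 1 by apply: ratio_itv01; rewrite ?ltW.
have mid : X + s^-1 *: (u + v) =
    (r1 / s) *: (X + r1^-1 *: u) + (1 - r1 / s) *: (X + r2^-1 *: v).
  by apply/matrixP => i j; rewrite !mxE /s; field; rewrite !gt_eqF.
have := (convex_functionP U f).1 cf _ _ _ t01 Uu Uv; rewrite -mid => fmid.
split; first by split=> //; rewrite mid; apply: (convex_setP U).1.
have e1 : s * (r1 / s) = r1 by rewrite mulrC divfK ?gt_eqF.
have e2 : s * (1 - r1 / s) = r2 by rewrite mulrBr e1 mulr1 /s addrC addKr.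
have := ler_wpM2l (ltW s0) fmid; rewrite mulrDr mulrA e1 mulrA e2 /perspective /s; nra.
Qed.

Lemma perspective_antitone {v r r'} : perspective_dom v r -> r <= r' ->
  perspective_dom v r' /\ perspective v r' <= perspective v r.
Proof.
move=> Dr; rewrite le_eqVlt => /predU1P [<- //|rr'].
have D0 : perspective_dom 0 (r' - r).
  by split; [rewrite subr_gt0 | rewrite scaler0 addr0; apply: in_core_mem].
by have := perspectiveD Dr D0; rewrite addr0 perspective0 addr0 addrC subrK.
Qed.

Let perspective_dom_nonempty v : perspective_dom v !=set0.
Proof.
have [e [e0 Ue]] := coreX v; exists e^-1; split; first by rewrite invr_gt0.
by rewrite invrK.
Qed.

Let perspective_lb v : exists b, forall r, perspective_dom v r -> b <= perspective v r.
Proof.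
have [r0 D0] := perspective_dom_nonempty (- v).
exists (- perspective (- v) r0) => r Dr.
by have := (perspectiveD Dr D0).2; rewrite subrr perspective0; lra.
Qed.

(* With [t = r^-1] this is [inf_(t > 0) (f (X + t v) - f X) / t], the one-sided directional
   derivative of [f] at [X]; in the variable [r] the quotient is jointly sublinear in [(v, r)]. *)
Definition dir_deriv v := inf (perspective v @` perspective_dom v).

Lemma dir_deriv_sublinear : sublinear dir_deriv.
Proof.
apply: (@inf_sublinear _ _ R^o) => // [c v r c0 Dr|u v r1 r2 D1 D2].
  by have [Dc ->] := perspectiveZ c0 Dr.
exact: perspectiveD.
Qed.

Lemma dir_deriv_le {v r} : perspective_dom v r -> dir_deriv v <= perspective v r.
Proof. by have [b hb] := perspective_lb v; apply: inf_image_le hb. Qed.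

Lemma dir_deriv_le_diff {w} : U w -> dir_deriv (w - X) <= f w - f X.
Proof.
move=> Uw; have D1 : perspective_dom (w - X) 1.
  by split; [exact: ltr01 | rewrite invr1 scale1r addrCA subrr addr0].
by have := dir_deriv_le D1; rewrite /perspective invr1 scale1r addrCA subrr addr0 mul1r.
Qed.

Lemma dir_deriv_ge0 {C} : convex_set C -> C X -> (forall w, C w -> f X <= f w) ->
  forall k, feasible_dirs C X k -> 0 <= dir_deriv k.
Proof.
move=> /convex_setP cC CX minX _ [t [w [t0 Cw ->]]].
apply: le_inf_image (perspective_dom_nonempty _) _ => r [r0 Ur].
have s0 : 0 < t + r by apply: ltr_wpDl.
have rtr : r <= t + r by lra.
have [_] := perspective_antitone (conj r0 Ur) rtr.
apply: le_trans; apply: mulr_ge0; first exact: ltW.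
rewrite subr_ge0; apply: minX.
have -> : X + (t + r)^-1 *: (t *: (w - X)) = (t / (t + r)) *: w + (1 - t / (t + r)) *: X.
  by apply/matrixP => i j; rewrite !mxE; field; rewrite gt_eqF.
by apply: cC => //; apply: ratio_itv01 => //; exact: ltW.
Qed.

End Perspective.

Theorem convex_min_subgradient {U f C X} :
  convex_set U -> convex_function U f -> in_core U X ->
  convex_set C -> C X -> (forall w, C w -> f X <= f w) ->
  exists g, (forall w, U w -> f X + vdot g (w - X) <= f w) /\
            (forall k, feasible_dirs C X k -> 0 <= vdot g k).
Proof.
move=> cU cf coreX cC CX minX.
have [g [g_le g_ge0]] := hahn_banach_cone (dir_deriv_sublinear cU cf coreX)
  (feasible_dirs_cone cC CX) (dir_deriv_ge0 cU cf coreX cC CX minX).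
exists g; split=> // w Uw.
by have := le_trans (g_le (w - X)) (dir_deriv_le_diff cU cf coreX Uw); lra.
Qed.

Theorem dual_cone_kernel {m K} {A : 'M[R]_(m, N)} {g} : convex_cone K ->
  (forall v, exists k, K k /\ A *m k = A *m v) ->
  (forall k, K k -> A *m k = 0 -> 0 <= vdot g k) ->
  exists l, forall k, K k -> vdot (A^T *m l) k <= vdot g k.
Proof.
move=> [K0 KZ KD] onto g_ge0.
pose D v := [set k | K k /\ A *m k = A *m v].
have D_lb v : exists b, forall k, D v k -> b <= vdot g k.
  have [k' [Kk' Ak']] := onto (- v); exists (- vdot g k') => k [Kk Ak].
  have := g_ge0 (k + k') (KD _ _ Kk Kk'); rewrite vdotDr mulmxDr Ak Ak' mulmxN subrr.
  by move=> /(_ erefl); lra.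
have D_le v k : D v k -> inf (vdot g @` D v) <= vdot g k.
  by have [b hb] := D_lb v; apply: inf_image_le hb.
have sp : sublinear (fun v => inf (vdot g @` D v)).
  apply: inf_sublinear => [v|//|c v k c0 [Kk Ak]|u v k1 k2 [Kk1 Ak1] [Kk2 Ak2]].
  - by have [k [Kk Ak]] := onto v; exists k.
  - split; last by rewrite vdotZr.
    by split; [apply: KZ => //; apply: ltW | rewrite -!scalemxAr Ak].
  - split; last by rewrite vdotDr.
    by split; [apply: KD | rewrite !mulmxDr Ak1 Ak2].
have [nu nu_le] := hahn_banach sp.
have nu_ker a : A *m a = 0 -> vdot nu a = 0.
  have D0 b : A *m b = 0 -> vdot nu b <= 0.
    move=> Ab; apply: le_trans (nu_le b) _; rewrite -(vdot0r g).
    by apply: D_le; split=> //; rewrite mulmx0 Ab.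
  by move=> Aa; apply/eqP; rewrite eq_le D0 //= -oppr_le0 -vdotNr D0 // mulmxN Aa oppr0.
have [l nuE] := orthogonal_kernel_range_tr nu_ker.
by exists l => k Kk; rewrite -nuE; apply: le_trans (nu_le k) (D_le _ _ _).
Qed.

Theorem kkt_conditions {m} {Om U : set 'cV[R]_N} {f} {A : 'M[R]_(m, N)} {d0 X} :
  convex_set Om -> convex_set U -> convex_function U f -> in_core U X ->
  (exists2 w0, A *m w0 = d0 & in_core Om w0) ->
  Om X -> A *m X = d0 -> (forall w, Om w -> A *m w = d0 -> f X <= f w) ->
  exists g l, (forall w, U w -> f X + vdot g (w - X) <= f w) /\
              (forall w, Om w -> vdot (A^T *m l - g) (w - X) <= 0).
Proof.
move=> cOm cU cf coreX [w0 Aw0 core0] OmX AX minX.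
pose C := [set w | Om w /\ A *m w = d0].
have cC : convex_set C.
  apply/convex_setP => x y t t01 [Omx Ax] [Omy Ay].
  split; first exact: (convex_setP Om).1.
  by rewrite mulmxDr -!scalemxAr Ax Ay -scalerDl subrKC scale1r.
have [g [g_sub g_ge0]] :=
  convex_min_subgradient cU cf coreX cC (conj OmX AX) (fun w Cw => minX w Cw.1 Cw.2).
have dirs_ker k : feasible_dirs Om X k -> A *m k = 0 -> feasible_dirs C X k.
  move=> [t [w [t0 Omw ->]]]; have [->|tn0] := eqVneq t 0.
    by rewrite scale0r => _; exists 0, X; rewrite scale0r.
  rewrite -scalemxAr mulmxBr AX => /eqP; rewrite scaler_eq0 (negPf tn0) subr_eq0.
  by move=> /eqP Aw; exists t, w.
have onto v : exists k, feasible_dirs Om X k /\ A *m k = A *m v.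
  have [e [e0 Ome]] := core0 v; exists (e^-1 *: (w0 + e *: v - X)); split.
    by exists e^-1, (w0 + e *: v); rewrite invr_ge0 ltW.
  by rewrite -scalemxAr !mulmxBr mulmxDr Aw0 AX -scalemxAr addrAC subrr add0r
    scalerA mulVf ?gt_eqF // scale1r.
have [l hl] := dual_cone_kernel (feasible_dirs_cone cOm OmX) onto
  (fun k Kk Ak => g_ge0 k (dirs_ker k Kk Ak)).
exists g, l; split=> // w Omw; rewrite vdotBl subr_le0; apply: hl.
by exists 1, w; rewrite scale1r ler01.
Qed.

Definition is_projection A Y X :=
  A X /\ forall Z, A Z -> vdot (Y - X) (Y - X) <= vdot (Y - Z) (Y - Z).

Lemma projection_vi {A Y X} : convex_set A -> is_projection A Y X ->
  forall W, A W -> vdot (Y - X) (W - X) <= 0.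
Proof.
move=> /convex_setP cA [AX minX] W AW; rewrite leNgt; apply/negP => pos.
set r := Y - X in pos *; set e := W - X in pos *.
set t := vdot r e / (vdot r e + vdot e e).
have den : 0 < vdot r e + vdot e e by apply: ltr_pwDl; rewrite ?vdot_ge0.
have t01 : 0 <= t <= 1 by apply: ratio_itv01; rewrite ?vdot_ge0 ?ltW.
have := minX _ (cA _ _ _ t01 AW AX).
have -> : Y - (t *: W + (1 - t) *: X) = r - t *: e.
  by apply/matrixP => i j; rewrite !mxE; ring.
rewrite vdot_subZ.
have te : t * vdot e e < vdot r e by rewrite mulrAC ltr_pdivrMr // ltr_pM2l // ltrDr.
have t0 : 0 < t by rewrite divr_gt0.
nra.
Qed.

Lemma vi_projection {A Y X} : A X ->
  (forall W, A W -> vdot (Y - X) (W - X) <= 0) -> is_projection A Y X.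
Proof.
move=> AX vi; split=> // Z AZ.
have -> : Y - Z = (Y - X) - 1 *: (Z - X) by rewrite scale1r opprB addrA subrK.
by rewrite vdot_subZ; have := vi Z AZ; have := vdot_ge0 (Z - X); lra.
Qed.

Lemma projection_unique {A Y X1 X2} : convex_set A ->
  is_projection A Y X1 -> is_projection A Y X2 -> X1 = X2.
Proof.
move=> cA p1 p2; have := projection_vi cA p1 _ p2.1; have := projection_vi cA p2 _ p1.1.
have -> : X1 - X2 = - (X2 - X1) by rewrite opprB.
have E : vdot (X2 - X1) (X2 - X1) = vdot (Y - X1) (X2 - X1) - vdot (Y - X2) (X2 - X1).
  by rewrite -vdotBl; congr vdot; rewrite opprB [RHS]addrC addrA subrK.
rewrite vdotNr => h2 h1; apply/eqP; rewrite eq_sym -subr_eq0 -vdot_eq0 eq_le vdot_ge0 andbT E.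
lra.
Qed.

End ConvexAnalysis.

Section Laplacian.
Context {R : realType} {n : nat} {a : 'I_n -> 'I_n -> R}.
Local Notation L := (laplacian a).

Lemma laplacian_mulE (c : 'I_n -> R) i :
  \sum_j L i j * c j = \sum_j a i j * (c i - c j).
Proof.
under eq_bigr do rewrite mxE mulrBl.
rewrite sumrB (bigD1 i) //= eqxx [X in _ + X - _]big1 => [|j /negPf ji].
  by rewrite addr0 mulr_suml -sumrB; apply: eq_bigr => j _; rewrite mulrBr.
by rewrite eq_sym ji mul0r.
Qed.

Lemma laplacian_row_sum i : \sum_j L i j = 0.
Proof.
by have := laplacian_mulE (fun=> 1) i; under eq_bigr do rewrite mulr1;
   rewrite subrr => ->; rewrite big1 // => j _; rewrite mulr0.
Qed.

Hypothesis a_sym : forall i j, a i j = a j i.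

Lemma laplacian_tr : L^T = L.
Proof. by apply/matrixP => i j; rewrite !mxE a_sym eq_sym; case: eqP => // ->. Qed.

Lemma laplacian_col_sum j : \sum_i L i j = 0.
Proof.
transitivity (\sum_i L j i); last exact: laplacian_row_sum.
by apply: eq_bigr => i _; rewrite -[in LHS]laplacian_tr mxE.
Qed.

Lemma laplacian_quad (c : 'I_n -> R) :
  2 * \sum_i c i * \sum_j L i j * c j = \sum_i \sum_j a i j * (c i - c j) ^+ 2.
Proof.
pose S := \sum_i \sum_j a i j * (c i * (c i - c j)).
have E : \sum_i c i * \sum_j L i j * c j = S.
  by apply: eq_bigr => i _; rewrite laplacian_mulE mulr_sumr; apply: eq_bigr => j _; ring.
have Ssym : S = \sum_i \sum_j a i j * (c j * (c j - c i)).
  by rewrite /S exchange_big; apply: eq_bigr => i _; apply: eq_bigr => j _; rewrite a_sym.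
rewrite E mulr2n mulrDl mul1r {2}Ssym -big_split; apply: eq_bigr => i _.
by rewrite -big_split; apply: eq_bigr => j _ /=; ring.
Qed.

Hypothesis a_ge0 : forall i j, 0 <= a i j.
Hypothesis a_connected : forall i j, connect (fun u v => 0 < a u v) i j.

Lemma laplacian_ker (c : 'I_n -> R) :
  (forall i, \sum_j L i j * c j = 0) -> forall i j, c i = c j.
Proof.
move=> Lc.
have Q0 : \sum_i \sum_j a i j * (c i - c j) ^+ 2 = 0.
  by rewrite -laplacian_quad big1 ?mulr0 // => i _; rewrite Lc mulr0.
have term0 i j : a i j * (c i - c j) ^+ 2 = 0.
  have ge0 i' j' : 0 <= a i' j' * (c i' - c j') ^+ 2 by rewrite mulr_ge0 ?sqr_ge0.
  move/eqP: Q0; rewrite psumr_eq0 => [/allP/(_ i (mem_index_enum _))/=|i' _]; last first.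
    exact: sumr_ge0.
  by rewrite psumr_eq0 // => /allP/(_ j (mem_index_enum _))/eqP.
have edge i j : 0 < a i j -> c i = c j.
  move=> aij; apply/eqP; rewrite -subr_eq0 -sqrf_eq0.
  by have /eqP := term0 i j; rewrite mulf_eq0 gt_eqF.
move=> i j; have /connectP [p pth ->] := a_connected i j.
by elim: p i pth => [|k p IH] i //= /andP [aik pth]; rewrite (edge _ _ aik) IH.
Qed.

End Laplacian.

Section KronLaplacian.
Context {R : realType} {n m : nat} {a : 'I_n -> 'I_n -> R}.
Local Notation L := (laplacian a).
Local Notation agents := (fam R (fun _ : 'I_n => m)).

Definition stack (l : agents) : 'M[R]_(n, m) := \matrix_(i, k) l i k 0.

Lemma kronL_stackE l i k : kronL L l i k 0 = (L *m stack l) i k.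
Proof. by rewrite /kronL summxE !mxE; apply: eq_bigr => j _; rewrite !mxE. Qed.

Lemma kronL_const {l : agents} : (forall i j, l i = l j) -> forall i, kronL L l i = 0.
Proof.
move=> lc i; rewrite /kronL (eq_bigr (fun j => L i j *: l i)) => [|j _]; last by rewrite (lc j i).
by rewrite -scaler_suml laplacian_row_sum scale0r.
Qed.

Hypothesis a_sym : forall i j, a i j = a j i.

Lemma kronL_sum (z : agents) : \sum_i kronL L z i = 0.
Proof.
rewrite /kronL exchange_big big1 // => j _.
by rewrite -scaler_suml laplacian_col_sum // scale0r.
Qed.

Hypothesis a_ge0 : forall i j, 0 <= a i j.
Hypothesis a_connected : forall i j, connect (fun u v => 0 < a u v) i j.

Lemma kronL_eq0 {l : agents} : (forall i, kronL L l i = 0) -> forall i j, l i = l j.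
Proof.
move=> Ll i j; apply/matrixP => k k'; rewrite ord1.
apply: (laplacian_ker a_sym a_ge0 a_connected (fun i => l i k 0)) => r.
transitivity ((L *m stack l) r k).
  by rewrite mxE; apply: eq_bigr => s _; rewrite [stack l s k]mxE.
by rewrite -kronL_stackE Ll mxE.
Qed.

Lemma kronL_onto {b : agents} : \sum_i b i = 0 -> exists z : agents, forall i, kronL L z i = b i.
Proof.
move=> b0; have : ((stack b)^T <= L)%MS.
  rewrite submxE; apply/eqP/matrixP => k j; rewrite mxE [RHS]mxE.
  have coker_const i i' : cokermx L i j = cokermx L i' j.
    apply: (laplacian_ker a_sym a_ge0 a_connected (fun i => cokermx L i j)) => r.
    transitivity ((L *m cokermx L) r j); first by rewrite [RHS]mxE.
    by rewrite mulmx_coker mxE.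
  have [i0 _|n0] := pickP (@predT 'I_n); last by rewrite big1 // => i; have := n0 i.
  under eq_bigr do rewrite (coker_const _ i0).
  rewrite -mulr_suml; have -> : \sum_i (stack b)^T k i = (\sum_i b i) k 0.
    by rewrite summxE; apply: eq_bigr => i _; rewrite !mxE.
  by rewrite b0 mxE mul0r.
case/submxP => D bD; exists (fun j => (row j D^T)^T) => i; apply/matrixP => k k'.
rewrite ord1 kronL_stackE; have -> : stack (fun j => (row j D^T)^T) = D^T.
  by apply/matrixP => j k''; rewrite !mxE.
by rewrite -[L]laplacian_tr // -trmx_mul -bD !mxE.
Qed.

End KronLaplacian.

Section Flatten.
Context {R : realType} {n : nat} {q : 'I_n -> nat}.
Implicit Types (x y : fam R q) (u v : 'cV[R]_(\sum_i q i)) (S : forall i, set 'cV[R]_(q i)).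

Definition flat x : 'cV[R]_(\sum_i q i) := \mxcol_i x i.
Definition unflat v : fam R q := fun i => submxcol v i.

Lemma unflatK : cancel flat unflat.
Proof. by move=> x; apply: functional_extensionality_dep => i; rewrite /unflat mxcolK. Qed.

Lemma flatK : cancel unflat flat.
Proof. exact: submxcolK. Qed.

Lemma flatB x y : flat (fsub x y) = flat x - flat y.
Proof. exact: mxcolB. Qed.

Lemma unflatD u v i : unflat (u + v) i = unflat u i + unflat v i.
Proof. exact: submxcolD. Qed.

Lemma unflatZ c u i : unflat (c *: u) i = c *: unflat u i.
Proof. by apply/matrixP => j k; rewrite !mxE. Qed.

Lemma fdot_flat x y : fdot x y = vdot (flat x) (flat y).
Proof. by rewrite /vdot tr_mxcol mul_mxrow_mxcol summxE. Qed.

Lemma Wmul_flat m (W : forall i, 'M[R]_(m, q i)) x : Wmul W x = \mxrow_i W i *m flat x.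
Proof. by rewrite mul_mxrow_mxcol. Qed.

Lemma flat_WbarT m (W : forall i, 'M[R]_(m, q i)) (l : 'cV[R]_m) :
  flat (WbarT W (fun=> l)) = (\mxrow_i W i)^T *m l.
Proof. by rewrite /flat tr_mxrow mxcol_mul. Qed.

Lemma is_proj_flat {S y x} :
  is_proj (prod_set S) y x <-> is_projection (unflat @^-1` prod_set S) (flat y) (flat x).
Proof.
rewrite /is_proj /is_projection /preimage /= unflatK; split=> [] [Sx min_x]; split=> // z Sz.
  by rewrite -[z]flatK -!flatB -!fdot_flat; apply: min_x.
by rewrite !fdot_flat !flatB; apply: min_x; rewrite /= unflatK.
Qed.

Lemma convex_prod_set {S} : (forall i, convex_set (S i)) -> convex_set (unflat @^-1` prod_set S).
Proof.
move=> cS; apply/convex_setP => u v t t01 Su Sv i.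
by rewrite unflatD !unflatZ; apply: (convex_setP (S i)).1.
Qed.

Lemma convex_sum_fun {S} {F : forall i, 'cV[R]_(q i) -> R} :
  (forall i, convex_function (S i) (F i)) ->
  convex_function (unflat @^-1` prod_set S) (sum_fun F \o unflat).
Proof.
move=> cF; apply/convex_functionP => u v t t01 Su Sv.
rewrite /= /sum_fun !mulr_sumr -big_split /=; apply: ler_sum => i _.
by rewrite unflatD !unflatZ; apply: (convex_functionP (S i) (F i)).1.
Qed.

Lemma in_core_prod_set {S x} : (forall i, nbhs (x i) (S i)) ->
  in_core (unflat @^-1` prod_set S) (flat x).
Proof.
move=> Sx v.
have near_i i : \forall t \near (0 : R), S i (x i + t *: unflat v i).
  by have := (nbhs0P _ _).1 (Sx i); move=> /(near0Z (unflat v i)).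
have : \forall t \near (0 : R), forall i, S i (x i + t *: unflat v i).
  exact: (@filter_forall _ _ (fun i t => S i (x i + t *: unflat v i)) _ _ near_i).
move=> /nbhs_ballP [r r0 rP].
have r20 : 0 < r / 2 by rewrite divr_gt0.
exists (r / 2); split=> // i; rewrite /= unflatD unflatZ unflatK.
apply: (rP (r / 2)); rewrite -ball_normE /= sub0r normrN gtr0_norm //.
by rewrite ltr_pdivrMr // ltr_pMr // ltr1n.
Qed.

End Flatten.

Lemma consensus_const {R : realType} {n m : nat} {l : fam R (fun _ : 'I_n => m)} :
  (forall i j, l i = l j) -> exists c, l = fun=> c.
Proof.
move=> lc; have [i0 _|n0] := pickP (@predT 'I_n).
  by exists (l i0); apply: functional_extensionality_dep => i; apply: lc.
by exists 0; apply: functional_extensionality_dep => i; have := n0 i.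
Qed.

Section DPOFA.
Context {R : realType} {n m : nat} {q : 'I_n -> nat} {a : 'I_n -> 'I_n -> R}.
Context {Om U : forall i : 'I_n, set 'cV[R]_(q i)} {F : forall i : 'I_n, 'cV[R]_(q i) -> R}.
Context {W : forall i : 'I_n, 'M[R]_(m, q i)} {d : fam R (fun _ : 'I_n => m)} {d0 : 'cV[R]_m}.
Hypotheses (a_sym : forall i j, a i j = a j i) (a_ge0 : forall i j, 0 <= a i j).
Hypothesis a_connected : forall i j, connect (fun u v => 0 < a u v) i j.
Hypotheses (Om_convex : forall i, convex_set (Om i)) (Om_sub_U : forall i, Om i `<=` U i).
Hypothesis d_sum : \sum_i d i = d0.

Local Notation Omega := (prod_set Om).
Local Notation f := (sum_fun F).
Local Notation L := (laplacian a).
Local Notation Wb := (\mxrow_i W i).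

Let Omega_convex : convex_set (unflat @^-1` Omega).
Proof. exact: convex_prod_set. Qed.

Lemma equilibrium_solution y l z :
  dpofa_equilibrium Omega (prod_set U) f W L d y l z ->
  forall x, is_proj Omega y x -> is_solution Omega f W d0 x.
Proof.
move=> [x1 [g [proj_x1 [g_sub [ydot [ldot zdot]]]]]] x proj_x.
have -> : x = x1.
  apply: (can_inj unflatK); apply: (projection_unique Omega_convex).
    exact/is_proj_flat/proj_x.
  exact/is_proj_flat/proj_x1.
have Wx1 : Wmul W x1 = d0.
  have : \sum_i (d i - Wbar W x1 i - kronL L l i - kronL L z i) = 0 by rewrite big1.
  have Ll0 : \sum_i kronL L l i = 0 by apply: big1 => i _; apply: zdot.
  rewrite !sumrB d_sum Ll0 (kronL_sum a_sym z) !subr0 => /eqP.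
  by rewrite subr_eq0 => /eqP.
have [c lc] := consensus_const (kronL_eq0 a_sym a_ge0 a_connected zdot).
have g_flat : flat g = flat x1 - flat y + Wb^T *m c.
  rewrite -flat_WbarT -lc -flatB /flat -mxcolD; congr (\mxcol_i _).
  apply: functional_extensionality_dep => i.
  move: (ydot i); rewrite addrAC => /eqP; rewrite subr_eq0 => /eqP <-.
  by rewrite /fsub [x1 i - _]addrC.
split; first exact: proj_x1.1.
split=> // w Omw Ww.
have vi := projection_vi Omega_convex (is_proj_flat.1 proj_x1) (flat w).
have := g_sub w (fun i => Om_sub_U _ _ (Omw i)); rewrite fdot_flat flatB g_flat.
rewrite vdotDl vdot_trmx mulmxBr -!Wmul_flat Ww Wx1 subrr vdot0r addr0 -opprB vdotNl.
by move: vi; rewrite /preimage /= unflatK => /(_ Omw); lra.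
Qed.

Hypotheses (U_open : forall i, open (U i)) (U_convex : forall i, convex_set (U i)).
Hypothesis F_convex : forall i, strictly_convex_on (U i) (F i).
Hypothesis slater : exists x : fam R q, (forall i, (Om i)° (x i)) /\ Wmul W x = d0.

Lemma solution_equilibrium x : is_solution Omega f W d0 x ->
  exists y l z, dpofa_equilibrium Omega (prod_set U) f W L d y l z /\ is_proj Omega y x.
Proof.
move=> [Omx [Wx min_x]].
have core_x : in_core (unflat @^-1` prod_set U) (flat x).
  apply: in_core_prod_set => i; apply: open_nbhs_nbhs.
  by split; [exact: U_open | exact: Om_sub_U].
have slater_flat : exists2 w0, Wb *m w0 = d0 & in_core (unflat @^-1` Omega) w0.
  have [x0 [x0_int Wx0]] := slater; exists (flat x0); first by rewrite -Wmul_flat.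
  exact: in_core_prod_set.
have Omx_flat : (unflat @^-1` Omega) (flat x) by rewrite /preimage /= unflatK.
have Wx_flat : Wb *m flat x = d0 by rewrite -Wmul_flat.
have min_flat w : (unflat @^-1` Omega) w -> Wb *m w = d0 -> f (unflat (flat x)) <= f (unflat w).
  by move=> Omw Ww; rewrite unflatK; apply: min_x; rewrite // Wmul_flat flatK.
have [g [lam [g_sub g_vi]]] := kkt_conditions Omega_convex (convex_prod_set U_convex)
  (convex_sum_fun (fun i => strictly_convex_on_convex (F_convex i))) core_x slater_flat
  Omx_flat Wx_flat min_flat.
pose y i := x i - unflat g i + WbarT W (fun=> lam) i.
have y_flat : flat y - flat x = Wb^T *m lam - g.
  rewrite /y /flat mxcolD mxcolB -/(flat x) -/(flat (unflat g)) flatK -/(flat _) flat_WbarT.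
  by rewrite addrAC [flat x - g - _]addrAC subrr add0r addrC.
have proj_y : is_proj Omega y x.
  by apply/is_proj_flat/vi_projection => // w; rewrite y_flat; apply: g_vi.
have [z Lz] : exists z, forall i, kronL L z i = d i - Wbar W x i.
  apply: (kronL_onto a_sym a_ge0 a_connected).
  by rewrite sumrB d_sum -/(Wmul W x) Wx subrr.
have L_lam i : kronL L (fun=> lam) i = 0 by apply: kronL_const.
exists y, (fun=> lam), z; split=> //; exists x, (unflat g); split=> //; split.
  move=> w Uw; rewrite fdot_flat flatB flatK.
  by have := g_sub (flat w); rewrite /preimage /= !unflatK; apply.
split; first by move=> i; rewrite /y -!addrA addNr.
by split=> i; rewrite L_lam // Lz subr0 subrr.
Qed.

End DPOFA.

Theorem theorem1 (R : realType) (n m : nat) (q : 'I_n -> nat)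
  (a : 'I_n -> 'I_n -> R)
  (Om U : forall i : 'I_n, set 'cV[R]_(q i))
  (F : forall i : 'I_n, 'cV[R]_(q i) -> R)
  (W : forall i : 'I_n, 'M[R]_(m, q i))
  (d : fam R (fun _ : 'I_n => m)) (d0 : 'cV[R]_m) :
  (forall i j, a i j = a j i) ->
  (forall i j, 0 <= a i j) ->
  (forall i j, connect (fun u v => 0 < a u v) i j) ->
  (forall i, closed (Om i)) -> (forall i, convex_set (Om i)) ->
  (forall i, open (U i)) -> (forall i, convex_set (U i)) ->
  (forall i, Om i `<=` U i) ->
  (forall i, strictly_convex_on (U i) (F i)) ->
  \sum_i d i = d0 ->
  (exists x : fam R q, (forall i, (Om i)° (x i)) /\ Wmul W x = d0) ->
  let Omega := prod_set Om in
  let Udom := prod_set U in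
  let f := sum_fun F in
  let L := laplacian a in
  (forall (y : fam R q) (l z : fam R (fun _ : 'I_n => m)),
     dpofa_equilibrium Omega Udom f W L d y l z ->
     forall x, is_proj Omega y x -> is_solution Omega f W d0 x) /\
  (forall x : fam R q, is_solution Omega f W d0 x ->
     exists (y : fam R q) (l z : fam R (fun _ : 'I_n => m)),
       dpofa_equilibrium Omega Udom f W L d y l z /\ is_proj Omega y x).
Proof.
move=> a_sym a_ge0 a_connected _ Om_convex U_open U_convex Om_sub_U F_convex d_sum slater /=.
split; first exact: equilibrium_solution a_sym a_ge0 a_connected Om_convex Om_sub_U d_sum.
exact: solution_equilibrium a_sym a_ge0 a_connected Om_convex Om_sub_U d_sum
  U_open U_convex F_convex slater.
Qed.
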